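(* Let $(V,\varphi,\xi,\eta,g)$, $\mathcal{F}$ and $p_1,\dots,p_4$ be as in the context, and let $F\in\mathcal{F}$ with associated operators $\mathcal{A}_{e_i}$ ($i=1,\dots,2n$), $\mathcal{A}_\xi$. Then, for all $X\in V$ and $i=1,\dots,2n$: (i) $\mathcal{A}_{e_i}X=h(\mathcal{A}_{e_i}hX)$ for all $i,X$ if and only if $F=p_1F$; (ii) $\mathcal{A}_{e_i}X=\eta(\mathcal{A}_{e_i}hX)\xi=-g(\mathcal{A}_\xi hX,\varphi e_i)\xi$ for all $i,X$ if and only if $F=p_2F$; (iii) $\mathcal{A}_{e_i}X=\eta(X)h(\mathcal{A}_{e_i}\xi)$ for all $i,X$ if and only if $F=p_3F$; (iv) $\mathcal{A}_{e_i}X=\eta(X)\eta(\mathcal{A}_{e_i}\xi)\xi=-\eta(X)g(\mathcal{A}_\xi\xi,\varphi e_i)\xi$ for all $i,X$ if and only if $F=p_4F$.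
   Context: Let $V$ be a real vector space of dimension $2n+1$ with an endomorphism $\varphi$, a vector $\xi$ and a linear form $\eta$ such that $\varphi\xi=0$, $\eta\circ\varphi=0$, $\eta(\xi)=1$, $\varphi^2=\mathrm{id}-\eta\otimes\xi$, and such that $\varphi$ restricted to $\mathbb{D}=\ker\eta$ has eigenvalues $\pm1$ with eigenspaces of equal dimension $n$. Let $g$ be a nondegenerate symmetric bilinear form on $V$ with $g(\varphi X,\varphi Y)=-g(X,Y)+\eta(X)\eta(Y)$; then $\eta(X)=g(X,\xi)$. Write $hX=X-\eta(X)\xi$. Fix a basis $\{e_1,\dots,e_{2n}\}$ of $\mathbb{D}$ and write $Y=Y^ie_i+\eta(Y)\xi$. Let $\mathcal{F}$ be the vector space of all $(0,3)$-tensors of the form $F(X,Y,Z)=Y^ig(\mathcal{A}_{e_i}X,Z)+\eta(Y)g(\mathcal{A}_\xi X,\varphi Z)$, where $\mathcal{A}_{e_i}:V\to V$ and $\mathcal{A}_\xi:V\to\mathbb{D}$ are linear maps (the operators associated with $F$) satisfying for all $X$, $i,j$: $g(\mathcal{A}_{e_i}X,e_j)=-g(\mathcal{A}_{e_j}X,e_i)$; $\mathcal{A}_{\varphi e_i}X=-\varphi(\mathcal{A}_{e_i}X)-g(\mathcal{A}_\xi X,e_i)\xi$ (index extended linearly); $\eta(\mathcal{A}_{e_i}X)=-g(\mathcal{A}_\xi X,\varphi e_i)$; $\eta(\mathcal{A}_\xi X)=0$. Define $p_1(F)(X,Y,Z)=F(hX,hY,hZ)$; $p_2(F)(X,Y,Z)=-\eta(Y)F(hX,hZ,\xi)+\eta(Z)F(hX,hY,\xi)$;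 $p_3(F)(X,Y,Z)=\eta(X)F(\xi,hY,hZ)$; $p_4(F)(X,Y,Z)=\eta(X)\eta(Y)F(\xi,\xi,hZ)-\eta(X)\eta(Z)F(\xi,\xi,hY)$. *)

From HB Require Import structures.
From mathcomp Require Import all_boot all_order all_algebra.
From mathcomp Require Import reals.
Set Implicit Arguments. Unset Strict Implicit. Unset Printing Implicit Defensive.
Import Order.TTheory GRing.Theory Num.Theory.
Local Open Scope ring_scope.

Section AlmostParacontact.
Variables (R : realType) (V : vectType R).

Definition tensor3 := V -> V -> V -> R.

Definition hproj (eta : 'Hom(V, R^o)) (xi : V) (X : V) : V := X - (eta X : R) *: xi.

Definition almost_paracontact (n : nat) (phi : 'End(V)) (xi : V)
    (eta : 'Hom(V, R^o)) : Prop :=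
  [/\ \dim {:V} = (2 * n).+1,
      [/\ phi xi = 0,
      forall X, eta (phi X) = 0 :> R,
      eta xi = 1 :> R &
      forall X, phi (phi X) = X - (eta X : R) *: xi],
      \dim (lker (phi - \1%VF)%R :&: lker eta)%VS = n &
      \dim (lker (phi + \1%VF)%R :&: lker eta)%VS = n].

Definition compatible_metric (phi : 'End(V)) (eta : 'Hom(V, R^o))
    (g : V -> V -> R) : Prop :=
  [/\ forall a X1 X2 Y, g (a *: X1 + X2) Y = a * g X1 Y + g X2 Y,
      forall X Y, g X Y = g Y X,
      forall X, (forall Y, g X Y = 0) -> X = 0 &
      forall X Y, g (phi X) (phi Y) = - g X Y + (eta X : R) * (eta Y : R)].

Definition D_basis_coords (n : nat) (xi : V) (eta : 'Hom(V, R^o))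
    (e : 'I_(2 * n) -> V) (c : V -> 'I_(2 * n) -> R) : Prop :=
  [/\ forall i, eta (e i) = 0 :> R,
      forall a : 'I_(2 * n) -> R, \sum_i a i *: e i = 0 -> forall i, a i = 0 &
      forall Y, Y = \sum_i c Y i *: e i + (eta Y : R) *: xi].

(* A_Y X for Y in D, extended linearly in the index: A_Y = Y^i A_{e_i} *)
Definition A_ext (n : nat) (c : V -> 'I_(2 * n) -> R)
    (A : 'I_(2 * n) -> 'End(V)) (Y X : V) : V :=
  \sum_j c Y j *: A j X.

(* conditions on the operators associated with F in the class F *)
Definition F_operators (n : nat) (phi : 'End(V)) (xi : V)
    (eta : 'Hom(V, R^o)) (g : V -> V -> R) (e : 'I_(2 * n) -> V)
    (c : V -> 'I_(2 * n) -> R) (A : 'I_(2 * n) -> 'End(V)) (Axi : 'End(V))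
    : Prop :=
  [/\ forall X i j, g (A i X) (e j) = - g (A j X) (e i),
      forall X i, A_ext c A (phi (e i)) X
                  = - phi (A i X) - g (Axi X) (e i) *: xi,
      forall X i, eta (A i X) = - g (Axi X) (phi (e i)) :> R &
      forall X, eta (Axi X) = 0 :> R].

Definition F_of (n : nat) (phi : 'End(V)) (eta : 'Hom(V, R^o))
    (g : V -> V -> R) (c : V -> 'I_(2 * n) -> R)
    (A : 'I_(2 * n) -> 'End(V)) (Axi : 'End(V)) : tensor3 :=
  fun X Y Z => \sum_i c Y i * g (A i X) Z + (eta Y : R) * g (Axi X) (phi Z).

Definition p1 (xi : V) (eta : 'Hom(V, R^o)) (F : tensor3) : tensor3 :=
  fun X Y Z => F (hproj eta xi X) (hproj eta xi Y) (hproj eta xi Z).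

Definition p2 (xi : V) (eta : 'Hom(V, R^o)) (F : tensor3) : tensor3 :=
  fun X Y Z => - ((eta Y : R) * F (hproj eta xi X) (hproj eta xi Z) xi)
               + (eta Z : R) * F (hproj eta xi X) (hproj eta xi Y) xi.

Definition p3 (xi : V) (eta : 'Hom(V, R^o)) (F : tensor3) : tensor3 :=
  fun X Y Z => (eta X : R) * F xi (hproj eta xi Y) (hproj eta xi Z).

Definition p4 (xi : V) (eta : 'Hom(V, R^o)) (F : tensor3) : tensor3 :=
  fun X Y Z => (eta X : R) * (eta Y : R) * F xi xi (hproj eta xi Z)
               - (eta X : R) * (eta Z : R) * F xi xi (hproj eta xi Y).

End AlmostParacontact.

From HB Require Import structures.
From mathcomp Require Import all_boot all_order all_algebra.
From mathcomp Require Import reals.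
From mathcomp Require Import ring.
Set Implicit Arguments. Unset Strict Implicit. Unset Printing Implicit Defensive.
Import Order.TTheory GRing.Theory Num.Theory.
Local Open Scope ring_scope.

(* Taking Y = e_j in F gives F(X, e_j, Z) = g(A_{e_j} X, Z), so by
   nondegeneracy of g each identity F = p_k F is equivalent to the stated
   identity for the operators A_{e_j}.  For the converse, the term of F
   involving A_xi is controlled by g(A_xi X, phi e_i) = - eta(A_{e_i} X):
   it vanishes in cases (i), (iii) and, in cases (ii), (iv), it reproduces
   the terms F(., ., xi) and F(xi, xi, .) appearing in p_2 and p_4.  The
   same identity makes the second equalities in (ii) and (iv) automatic. *)

Section BilinearForm.
Variables (R : pzRingType) (V : lmodType R) (g : V -> V -> R).
Hypothesis g_linear : forall a X1 X2 Y, g (a *: X1 + X2) Y = a * g X1 Y + g X2 Y.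

Lemma form0l Y : g 0 Y = 0.
Proof.
have := g_linear 1 0 0 Y; rewrite scaler0 addr0 mul1r.
by rewrite -{1}[g 0 Y]addr0 => /addrI <-.
Qed.

Lemma formZl a X Y : g (a *: X) Y = a * g X Y.
Proof. by rewrite -[a *: X]addr0 g_linear form0l addr0. Qed.

Lemma formDl X1 X2 Y : g (X1 + X2) Y = g X1 Y + g X2 Y.
Proof. by have := g_linear 1 X1 X2 Y; rewrite scale1r mul1r. Qed.

Lemma formBl X1 X2 Y : g (X1 - X2) Y = g X1 Y - g X2 Y.
Proof. by rewrite formDl -scaleN1r formZl mulN1r. Qed.

Hypothesis g_sym : forall X Y, g X Y = g Y X.

Lemma form_sumr (I : finType) U (a : I -> R) (v : I -> V) :
  g U (\sum_i a i *: v i) = \sum_i a i * g U (v i).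
Proof.
apply: (big_ind2 (fun x y => g U x = y)).
- by rewrite g_sym form0l.
- by move=> x1 r1 y1 r2 <- <-; rewrite g_sym formDl (g_sym x1) (g_sym y1).
- by move=> i _; rewrite g_sym formZl g_sym.
Qed.

Hypothesis g_nondeg : forall X, (forall Y, g X Y = 0) -> X = 0.

Lemma form_injl U W : (forall Z, g U Z = g W Z) -> U = W.
Proof.
move=> gUW; apply/eqP; rewrite -subr_eq0; apply/eqP/g_nondeg => Y.
by rewrite formBl gUW subrr.
Qed.

End BilinearForm.

Section ParacontactOperators.
Variables (R : realType) (V : vectType R) (n : nat).
Variables (phi : 'End(V)) (xi : V) (eta : 'Hom(V, R^o)) (g : V -> V -> R).
Variables (e : 'I_(2 * n) -> V) (c : V -> 'I_(2 * n) -> R).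
Variables (A : 'I_(2 * n) -> 'End(V)) (Axi : 'End(V)).
Hypothesis apc : almost_paracontact n phi xi eta.
Hypothesis gcompat : compatible_metric phi eta g.
Hypothesis Dbasis : D_basis_coords xi eta e c.
Hypothesis Fops : F_operators phi xi eta g e c A Axi.

Local Notation h := (hproj eta xi).
Local Notation F := (F_of phi eta g c A Axi).

Let phi_xi : phi xi = 0. Proof. by case: apc => _ []. Qed.
Let eta_xi : eta xi = 1 :> R. Proof. by case: apc => _ []. Qed.

Let g_linear : forall a X1 X2 Y, g (a *: X1 + X2) Y = a * g X1 Y + g X2 Y.
Proof. by case: gcompat. Qed.
Let g_sym : forall X Y, g X Y = g Y X. Proof. by case: gcompat. Qed.
Let g_nondeg : forall X, (forall Y, g X Y = 0) -> X = 0. Proof. by case: gcompat. Qed.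
Let g_phi : forall X Y, g (phi X) (phi Y) = - g X Y + (eta X : R) * (eta Y : R).
Proof. by case: gcompat. Qed.

Let eta_e : forall i, eta (e i) = 0 :> R. Proof. by case: Dbasis. Qed.
Let e_free : forall a : 'I_(2 * n) -> R, \sum_i a i *: e i = 0 -> forall i, a i = 0.
Proof. by case: Dbasis. Qed.
Let coord_decomp : forall Y, Y = \sum_i c Y i *: e i + (eta Y : R) *: xi.
Proof. by case: Dbasis. Qed.

Let eta_A : forall X i, eta (A i X) = - g (Axi X) (phi (e i)) :> R.
Proof. by case: Fops. Qed.

Let eta_scale : forall a u, eta (a *: u) = a * eta u :> R.
Proof. by move=> a u; rewrite linearZ. Qed.

Lemma metric_xir X : g X xi = eta X.
Proof.
have := g_phi X xi; rewrite phi_xi eta_xi mulr1 g_sym form0l //.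
by move/eqP; rewrite eq_sym addrC subr_eq0 => /eqP.
Qed.

Lemma metric_xil X : g xi X = eta X.
Proof. by rewrite g_sym metric_xir. Qed.

Lemma eta_h X : eta (h X) = 0 :> R.
Proof. by rewrite /hproj linearB /= eta_scale eta_xi mulr1 subrr. Qed.

Lemma h_e j : h (e j) = e j.
Proof. by rewrite /hproj eta_e scale0r subr0. Qed.

Lemma h_xi : h xi = 0.
Proof. by rewrite /hproj eta_xi scale1r subrr. Qed.

Lemma phi_h Z : phi (h Z) = phi Z.
Proof. by rewrite /hproj linearB linearZ /= phi_xi scaler0 subr0. Qed.

Lemma coord_unique Y (a : 'I_(2 * n) -> R) b :
  Y = \sum_i a i *: e i + b *: xi -> forall i, a i = c Y i.
Proof.
move=> defY.
have eta_Y : b = eta Y.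
  rewrite defY linearD /= eta_scale linear_sum /= eta_xi mulr1 big1 ?add0r //.
  by move=> i _; rewrite eta_scale eta_e mulr0.
move=> i; apply/eqP; rewrite -subr_eq0; apply/eqP; move: i; apply: e_free.
under eq_bigr do rewrite scalerBl.
rewrite sumrB; have := coord_decomp Y; rewrite {1}defY -eta_Y => /addIr ->.
by rewrite subrr.
Qed.

Lemma coord_e j i : c (e j) i = (i == j)%:R.
Proof.
symmetry; apply: (@coord_unique (e j) (fun k => (k == j)%:R) 0).
rewrite scale0r addr0 (bigD1 j) //= eqxx scale1r big1 ?addr0 //.
by move=> k /negPf ->; rewrite scale0r.
Qed.

Lemma coord_xi i : c xi i = 0.
Proof.
symmetry; apply: (@coord_unique xi (fun _ => 0) 1).
by rewrite big1 ?add0r ?scale1r // => k _; rewrite scale0r.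
Qed.

Lemma coord_h Y i : c (h Y) i = c Y i.
Proof.
symmetry; apply: (@coord_unique _ (c Y) 0).
by rewrite scale0r addr0 /hproj {1}(coord_decomp Y) addrK.
Qed.

Lemma sum_coord_e j (t : 'I_(2 * n) -> R) : \sum_i c (e j) i * t i = t j.
Proof.
rewrite (bigD1 j) //= coord_e eqxx mul1r big1 ?addr0 //.
by move=> i ne_ij; rewrite coord_e (negPf ne_ij) mul0r.
Qed.

Lemma metric_h U Z : g U (h Z) = g (h U) Z.
Proof.
by rewrite /hproj g_sym !formBl // !formZl // !metric_xil (g_sym Z U); ring.
Qed.

Lemma metric_phi U Z : g U (phi Z) = \sum_i c Z i * g U (phi (e i)).
Proof.
rewrite {1}(coord_decomp Z) linearD linearZ /= phi_xi scaler0 addr0.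
rewrite linear_sum /=; under eq_bigr do rewrite linearZ /=.
exact: form_sumr.
Qed.

Lemma metric_Axi_phi_e X i : g (Axi X) (phi (e i)) = - eta (A i X).
Proof. by rewrite eta_A opprK. Qed.

Lemma metric_Axi_phi_eq0 X :
  (forall i, eta (A i X) = 0 :> R) -> forall Z, g (Axi X) (phi Z) = 0.
Proof.
move=> etaAX0 Z; rewrite metric_phi big1 // => i _.
by rewrite metric_Axi_phi_e etaAX0 oppr0 mulr0.
Qed.

Lemma sum_coord_metric_Axi X Z :
  \sum_i c Z i * g (Axi X) (phi (e i)) = - \sum_i c Z i * eta (A i X).
Proof. by rewrite -sumrN; apply: eq_bigr => i _; rewrite metric_Axi_phi_e mulrN. Qed.

Lemma Axi_split X : Axi X = Axi (h X) + eta X *: Axi xi.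
Proof. by rewrite /hproj linearB linearZ /= subrK. Qed.

Lemma F_e X j Z : F X (e j) Z = g (A j X) Z.
Proof. by rewrite /F_of eta_e mul0r addr0 sum_coord_e. Qed.

Lemma F_xir U W : F U W xi = \sum_i c W i * eta (A i U).
Proof.
rewrite /F_of phi_xi g_sym form0l // mulr0 addr0.
by apply: eq_bigr => i _; rewrite metric_xir.
Qed.

Lemma F_xixi W : F xi xi W = g (Axi xi) (phi W).
Proof.
rewrite /F_of eta_xi mul1r big1 ?add0r // => i _.
by rewrite coord_xi mul0r.
Qed.

Lemma F_eq_p1_iff :
  (forall i X, A i X = h (A i (h X)))
  <-> (forall X Y Z, F X Y Z = p1 xi eta F X Y Z).
Proof.
split=> [AhX X Y Z | Fp1 i X].
  rewrite /p1 /F_of eta_h mul0r addr0 (@metric_Axi_phi_eq0 X) ?mulr0 ?addr0.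
    by apply: eq_bigr => i _; rewrite coord_h metric_h -AhX.
  by move=> i; rewrite AhX eta_h.
apply: (form_injl g_linear g_nondeg) => Z.
by have := Fp1 X (e i) Z; rewrite /p1 h_e !F_e => ->; rewrite metric_h.
Qed.

Lemma F_eq_p2_iff :
  (forall i X, A i X = (eta (A i (h X)) : R) *: xi
               /\ (eta (A i (h X)) : R) *: xi
                  = - g (Axi (h X)) (phi (e i)) *: xi)
  <-> (forall X Y Z, F X Y Z = p2 xi eta F X Y Z).
Proof.
split=> [AhX X Y Z | Fp2 i X].
  have {}AhX i X' : A i X' = eta (A i (h X')) *: xi by case: (AhX i X').
  have Axixi0 : forall Z, g (Axi xi) (phi Z) = 0.
    by apply: metric_Axi_phi_eq0 => i; rewrite AhX h_xi linear0 (linear0 eta) scale0r linear0.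
  have sum_coord_h W : \sum_i c (h W) i * eta (A i (h X))
                       = \sum_i c W i * eta (A i (h X)).
    by apply: eq_bigr => i _; rewrite coord_h.
  rewrite /p2 !F_xir /F_of Axi_split formDl // formZl // Axixi0 mulr0 addr0.
  rewrite metric_phi sum_coord_metric_Axi.
  under eq_bigr do rewrite AhX formZl // metric_xil mulrA.
  by rewrite !sum_coord_h -mulr_suml; ring.
split; last by rewrite eta_A.
apply: (form_injl g_linear g_nondeg) => Z; have := Fp2 X (e i) Z.
rewrite /p2 eta_e mul0r oppr0 add0r h_e F_e F_xir sum_coord_e => ->.
by rewrite formZl // metric_xil mulrC.
Qed.

Lemma F_eq_p3_iff :
  (forall i X, A i X = (eta X : R) *: h (A i xi))
  <-> (forall X Y Z, F X Y Z = p3 xi eta F X Y Z).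
Proof.
split=> [AX X Y Z | Fp3 i X].
  rewrite /p3 /F_of eta_h mul0r addr0 (@metric_Axi_phi_eq0 X) ?mulr0 ?addr0.
    rewrite mulr_sumr; apply: eq_bigr => i _.
    by rewrite coord_h metric_h AX formZl //; ring.
  by move=> i; rewrite AX eta_scale eta_h mulr0.
apply: (form_injl g_linear g_nondeg) => Z.
by have := Fp3 X (e i) Z; rewrite /p3 h_e !F_e => ->; rewrite metric_h formZl.
Qed.

Lemma F_eq_p4_iff :
  (forall i X, A i X = ((eta X : R) * (eta (A i xi) : R)) *: xi
               /\ ((eta X : R) * (eta (A i xi) : R)) *: xi
                  = - ((eta X : R) * g (Axi xi) (phi (e i))) *: xi)
  <-> (forall X Y Z, F X Y Z = p4 xi eta F X Y Z).
Proof.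
split=> [AX X Y Z | Fp4 i X].
  have {}AX i X' : A i X' = (eta X' * eta (A i xi)) *: xi by case: (AX i X').
  have Axih0 : forall Z, g (Axi (h X)) (phi Z) = 0.
    by apply: metric_Axi_phi_eq0 => i; rewrite AX eta_h mul0r scale0r linear0.
  have sum_coord_AX : \sum_i c Y i * g (A i X) Z
                      = (\sum_i c Y i * eta (A i xi)) * (eta X * eta Z).
    rewrite mulr_suml; apply: eq_bigr => i _.
    by rewrite AX formZl // metric_xil; ring.
  rewrite /p4 !F_xixi !phi_h /F_of Axi_split formDl // formZl // Axih0 add0r.
  by rewrite (metric_phi _ Y) sum_coord_metric_Axi sum_coord_AX; ring.
split; last by rewrite eta_A mulrN.
apply: (form_injl g_linear g_nondeg) => Z; have := Fp4 X (e i) Z.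
rewrite /p4 eta_e mulr0 mul0r sub0r h_e F_xixi metric_Axi_phi_e F_e => ->.
by rewrite formZl // metric_xil; ring.
Qed.

End ParacontactOperators.

Theorem proposition2p2 (R : realType) (V : vectType R) (n : nat)
    (phi : 'End(V)) (xi : V) (eta : 'Hom(V, R^o)) (g : V -> V -> R)
    (e : 'I_(2 * n) -> V) (c : V -> 'I_(2 * n) -> R)
    (A : 'I_(2 * n) -> 'End(V)) (Axi : 'End(V)) :
  almost_paracontact n phi xi eta ->
  compatible_metric phi eta g ->
  D_basis_coords xi eta e c ->
  F_operators phi xi eta g e c A Axi ->
  let F := F_of phi eta g c A Axi in
  let h := hproj eta xi in
  [/\ (forall i X, A i X = h (A i (h X)))
        <-> (forall X Y Z, F X Y Z = p1 xi eta F X Y Z),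
      (forall i X, A i X = (eta (A i (h X)) : R) *: xi
                   /\ (eta (A i (h X)) : R) *: xi
                      = - g (Axi (h X)) (phi (e i)) *: xi)
        <-> (forall X Y Z, F X Y Z = p2 xi eta F X Y Z),
      (forall i X, A i X = (eta X : R) *: h (A i xi))
        <-> (forall X Y Z, F X Y Z = p3 xi eta F X Y Z) &
      (forall i X, A i X = ((eta X : R) * (eta (A i xi) : R)) *: xi
                   /\ ((eta X : R) * (eta (A i xi) : R)) *: xi
                      = - ((eta X : R) * g (Axi xi) (phi (e i))) *: xi)
        <-> (forall X Y Z, F X Y Z = p4 xi eta F X Y Z)].
Proof.
move=> apc gcompat Dbasis Fops F h; split.
- exact: (F_eq_p1_iff apc gcompat Dbasis Fops).
- exact: (F_eq_p2_iff apc gcompat Dbasis Fops).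
- exact: (F_eq_p3_iff apc gcompat Dbasis Fops).
- exact: (F_eq_p4_iff apc gcompat Dbasis Fops).
Qed.
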